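(* Let $\mathrm{2RR}=\textsc{RoundRobin}(\mathrm{ALG}_{\mathrm{fail}},\mathrm{ALG}_{\mathrm{succ}};1,1)$ be run on an SSC instance $I$. Then for every realization $x$ and every $h\in\{\mathrm{fail},\mathrm{succ}\}$, $$\sum_{\tau=1}^{\tau_1}\mathrm{cost}^{\mathrm{2RR}}_\tau(\mathrm{ALG}_h,I)\le 2\,\mathrm{cost}(\mathrm{OPT},I).$$
   Context: An instance $I$ of Stochastic Score Classification (SSC) consists of tests $N=\{1,\dots,n\}$, costs $c_j\ge 0$, success probabilities $p_j\in(0,1)$, and integers $0=t_1<t_2<\dots<t_B<t_{B+1}=n+1$. The outcome vector $x\in\{0,1\}^N$ has independent coordinates with $\Pr[x_j=1]=p_j$ (test $j$ succeeds iff $x_j=1$, otherwise it fails). The score $f(x)$ is the unique $i\in\{1,\dots,B\}$ with $t_i\le\|x\|_1\le t_{i+1}-1$. A (possibly adaptive) strategy conducts tests one at a time, each at most once, the choice of the next test possibly depending on outcomes observed so far, and stops as soon as $f(x)$ is determined (i.e., all $x'\in\{0,1\}^N$ agreeing with $x$ on the conducted tests have $f(x')=f(x)$). $\mathrm{cost}(S,I)$ is the random total cost of the tests conducted by strategy $S$ on $I$. $\mathrm{OPT}$ is a fixed strategy minimizing $\mathbb{E}[\mathrm{cost}(S,I)]$ over all adaptive strategies $S$. Let $\sigma_{\mathrm{fail}},\sigma_{\mathrm{succ}}$ be permutations of $N$ (ties broken arbitrarily) such that $c_{\sigma_{\mathrm{fail}}(1)}/(1-p_{\sigma_{\mathrm{fail}}(1)})\le\dots\le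 c_{\sigma_{\mathrm{fail}}(n)}/(1-p_{\sigma_{\mathrm{fail}}(n)})$ and $c_{\sigma_{\mathrm{succ}}(1)}/p_{\sigma_{\mathrm{succ}}(1)}\le\dots\le c_{\sigma_{\mathrm{succ}}(n)}/p_{\sigma_{\mathrm{succ}}(n)}$; $\mathrm{ALG}_{\mathrm{fail}},\mathrm{ALG}_{\mathrm{succ}}$ denote these orders of tests. $\textsc{RoundRobin}(\mathrm{ALG}_1,\dots,\mathrm{ALG}_k;\alpha_1,\dots,\alpha_k)$, for fixed orders $\mathrm{ALG}_h$ of $N$ and weights $\alpha_h>0$: initialize $C_h=0$ for all $h$; while $f(x)$ is not determined, for each $h$ let $\delta_h$ be the cost of the first test in the order $\mathrm{ALG}_h$ that has not yet been conducted by the scheme, choose $h^\star\in\arg\min_h (C_h+\delta_h)/\alpha_h$ (ties arbitrary), conduct that test of $\mathrm{ALG}_{h^\star}$, and set $C_{h^\star}\leftarrow C_{h^\star}+\delta_{h^\star}$. Each loop iteration is a step; $\mathrm{cost}^{\mathrm{2RR}}_\tau(\mathrm{ALG}_h,I)$ equals the cost of the test conducted in step $\tau$ if $h=h^\star$ in that step, and $0$ otherwise. For a realization $x$ with $i=f(x)$, $\tau_1$ is the smallest integer $\tau\ge 0$ such that among the tests conducted by $\mathrm{2RR}$ in steps $1,\dots,\tau$ at least $t_i$ succeeded or at least $n+1-t_{i+1}$ failed. *)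

From mathcomp Require Import all_boot all_order all_algebra.
Set Implicit Arguments. Unset Strict Implicit. Unset Printing Implicit Defensive.
Import Order.TTheory GRing.Theory Num.Theory.
Local Open Scope ring_scope.

Section SSC.
Variable R : realFieldType.
Variable n : nat.
Variable c : 'I_n -> R.
Variable p : 'I_n -> R.
(* thresholds t_1 < ... < t_{B+1}, with t_1 = 0 and t_{B+1} = n+1 *)
Variable B : nat.
Variable t : nat -> nat.

(* outcome vectors x in {0,1}^N ; true = success *)
Definition outcome := {ffun 'I_n -> bool}.

Definition weight (x : outcome) : nat := (\sum_(j < n) (x j : nat))%N.

(* f(x): the (unique, under the threshold hypotheses) i in {1..B}
   with t_i <= |x|_1 <= t_{i+1} - 1 *)
Definition score (x : outcome) : nat :=
  (\max_(1 <= i < B.+1 | t i <= weight x) i)%N.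

Definition determined (x : outcome) (T : seq 'I_n) : bool :=
  [forall x' : outcome,
     [forall j : 'I_n, (j \in T) ==> (x' j == x j)] ==> (score x' == score x)].

Definition prob (x : outcome) : R :=
  \prod_(j < n) (if x j then p j else 1 - p j).

Definition strategy := seq ('I_n * bool) -> 'I_n.

Fixpoint shist (S : strategy) (x : outcome) (k : nat) : seq ('I_n * bool) :=
  match k with
  | 0 => [::]
  | k'.+1 =>
      let h := shist S x k' in
      if determined x (map fst h) then h else rcons h (S h, x (S h))
  end.

Definition valid_strategy (S : strategy) : Prop :=
  forall (x : outcome) (k : nat),
    ~~ determined x (map fst (shist S x k)) ->
    S (shist S x k) \notin map fst (shist S x k).

(* cost(S, I) on realization x (at most n tests are ever conducted) *)
Definition scost (S : strategy) (x : outcome) : R :=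
  \sum_(e <- shist S x n) c e.1.

Definition Ecost (S : strategy) : R := \sum_(x : outcome) prob x * scost S x.

(* A step is recorded as (h, j): h = false for ALG_fail, h = true for
   ALG_succ, and j the test conducted in that step. *)
Variables (sfail ssucc : seq 'I_n).
Variable tie : nat -> bool.
Variable x : outcome.

Definition first_untested (s : seq 'I_n) (done : seq 'I_n) : option 'I_n :=
  ohead [seq j <- s | j \notin done].

Definition Cacc (h : bool) (tr : seq (bool * 'I_n)) : R :=
  \sum_(e <- tr | e.1 == h) c e.2.

Definition rr_step (tau : nat) (tr : seq (bool * 'I_n)) : option (bool * 'I_n) :=
  let done := map snd tr in
  match first_untested sfail done, first_untested ssucc done with
  | Some jf, Some js =>
      let vf := Cacc false tr + c jf in
      let vs := Cacc true tr + c js in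
      let h := if vf < vs then false else if vs < vf then true else tie tau in
      Some (h, if h then js else jf)
  | _, _ => None
  end.

Fixpoint rr_trace (k : nat) : seq (bool * 'I_n) :=
  match k with
  | 0 => [::]
  | k'.+1 =>
      let tr := rr_trace k' in
      if determined x (map snd tr) then tr
      else match rr_step (size tr).+1 tr with
           | Some e => rcons tr e
           | None => tr
           end
  end.

(* full run of 2RR on x (each step conducts a new test, so n steps suffice) *)
Definition rr_run : seq (bool * 'I_n) := rr_trace n.

Definition rr_cost (h : bool) (tau : nat) : R :=
  match onth rr_run tau.-1 with
  | Some e => if (tau > 0)%N && (e.1 == h) then c e.2 else 0
  | None => 0
  end.

Definition tau1_cond (tau : nat) : bool :=
  let T := map snd (take tau rr_run) in
  let i := score x in
  (count (fun j => x j) T >= t i)%N || (count (fun j => ~~ x j) T >= n.+1 - t i.+1)%N.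

Definition tau1 : nat := find tau1_cond (iota 0 (size rr_run).+1).

End SSC.

(* Let [T] be the set of tests [OPT] conducts on [x]. Since [T] determines the
   score [i], it contains at least [t i] successes and [n + 1 - t (i + 1)]
   failures, so every step of 2RR up to [tau1] starts with fewer than [#|T|]
   tests done. At such a step let [q] be the smaller of the ratios
   [c j / Pr[x j = h]] of the next tests [j] of the two orders, attained by
   order [h]. By sortedness every test already conducted by order [h] costs at
   most [q], while every untested test [w] satisfies [q <= c w / p w] and
   [q <= c w / (1 - p w)], hence [q <= 2 c w]. Trading the done tests outside
   [T] for the undone tests of [T] bounds the cost of order [h] after its next
   test by [2 cost(T)], and the round-robin rule charges the chosen order no
   more than that. *)

From mathcomp Require Import all_boot all_order all_algebra.
From mathcomp Require Import zify.
Set Implicit Arguments. Unset Strict Implicit. Unset Printing Implicit Defensive.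
Import Order.TTheory GRing.Theory Num.Theory.
Local Open Scope ring_scope.

Section ExchangeBound.
Variables (R : realFieldType) (I : finType) (c : I -> R).
Hypothesis c_ge0 : forall j, 0 <= c j.

Lemma sumr_subset_le (X Y : {set I}) :
  X \subset Y -> \sum_(j in X) c j <= \sum_(j in Y) c j.
Proof.
move=> sXY; rewrite [leRHS](big_setID X) /= (setIidPr sXY) lerDl.
exact: sumr_ge0.
Qed.

Lemma sum_capped_addr_le (A D T : {set I}) (q : R) :
  0 <= q -> A \subset D -> (#|D| < #|T|)%N ->
  (forall j, j \in A -> c j <= q) -> (forall w, w \notin D -> q <= 2 * c w) ->
  \sum_(j in A) c j + q <= 2 * \sum_(j in T) c j.
Proof.
move=> q_ge0 sAD ltDT capA lowD.
have sumA : \sum_(j in A) c j <= \sum_(j in D :&: T) c j + q *+ #|D :\: T|.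
  rewrite (big_setID T) /=; apply: lerD; first by rewrite sumr_subset_le ?setSI.
  rewrite -sumr_const; apply: (@le_trans _ _ (\sum_(j in A :\: T) q)).
    by apply: ler_sum => j /setDP[jA _]; apply: capA.
  by rewrite !sumr_const ler_wpMn2l // subset_leq_card ?setSD.
have sumTD : q *+ #|T :\: D| <= 2 * \sum_(j in T :\: D) c j.
  by rewrite -sumr_const mulr_sumr; apply: ler_sum => j /setDP[_ /lowD].
have cardTD : (#|D :\: T|.+1 <= #|T :\: D|)%N.
  by move: ltDT; rewrite -(cardsID T D) -(cardsID D T) setIC; lia.
have sumDT_ge0 : 0 <= \sum_(j in D :&: T) c j by apply: sumr_ge0.
rewrite [X in 2 * X](big_setID D) /= setIC mulrDr.
apply: le_trans (lerD sumA (lexx q)) _; rewrite -addrA -mulrSr.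
apply: lerD; first by rewrite ler_peMl // ler1n.
by apply: le_trans sumTD; apply: ler_wpMn2l.
Qed.

End ExchangeBound.

Lemma sum_onth_take (V : nmodType) (T : Type) (F : T -> V) (s : seq T) m :
  \sum_(0 <= i < m) oapp F 0 (onth s i) = \sum_(e <- take m s) F e.
Proof.
elim: m s => [|m IH] s; first by rewrite big_geq // take0 big_nil.
case: s => [|e s]; last by rewrite big_nat_recl //= big_cons -IH.
by rewrite big_nil big1 // => i _; rewrite onth0n.
Qed.

Lemma first_untested_min (d : Order.disp_t) (X : porderType d) (n : nat)
    (f : 'I_n -> X) (s done : seq 'I_n) (j : 'I_n) :
  perm_eq s (enum 'I_n) -> sorted (fun a b => (f a <= f b)%O) s ->
  first_untested s done = Some j ->
  j \notin done /\ forall w, w \notin done -> (f j <= f w)%O.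
Proof.
rewrite /first_untested => s_all s_sorted.
have : sorted (fun a b => (f a <= f b)%O) [seq w <- s | w \notin done].
  by apply: sorted_filter s_sorted => a b e /le_trans; apply.
have untested_in w : w \notin done -> w \in [seq w <- s | w \notin done].
  by rewrite mem_filter (perm_mem s_all) mem_enum andbT.
case E: [seq w <- s | w \notin done] untested_in => [|j0 s'] //= untested_in sorted_s' [<-].
have : j0 \in [seq w <- s | w \notin done] by rewrite E mem_head.
rewrite mem_filter => /andP[j0_new _]; split => // w w_new.
move: (untested_in w w_new); rewrite inE => /predU1P[-> //|w_s'].
have /allP := order_path_min (fun a b e => @le_trans _ _ (f a) (f b) (f e)) sorted_s'.
exact.
Qed.

Section Score.
Variables (n B : nat) (t : nat -> nat).
Hypotheses (B_ge1 : (1 <= B)%N) (t1 : t 1%N = 0%N) (tB : t B.+1 = n.+1).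

Lemma score_max (y : outcome n) i :
  (1 <= i <= B)%N -> (t i <= weight y)%N -> (i <= score B t y)%N.
Proof.
move=> i_range le_ti; rewrite /score.
by apply: (leq_bigmax_seq (F := id)); rewrite ?mem_index_iota ?ltnS.
Qed.

Lemma score_le (y : outcome n) : (score B t y <= B)%N.
Proof. by apply/bigmax_leqP_seq => i; rewrite mem_index_iota ltnS => /andP[]. Qed.

Lemma t_score_le_weight (y : outcome n) : (t (score B t y) <= weight y)%N.
Proof.
have : (score B t y == 0%N) || (t (score B t y) <= weight y)%N.
  apply: (big_ind (fun m => (m == 0%N) || (t m <= weight y)%N)) => //.
    by move=> a b Pa Pb; case: (leqP a b).
  by move=> i ->; rewrite orbT.
have : (0 < score B t y)%N by apply: (@score_max y 1%N); rewrite ?B_ge1 ?t1.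
by case: (score B t y).
Qed.

Lemma weight_lt_t_succ_score (y : outcome n) :
  (score B t y < B)%N -> (weight y < t (score B t y).+1)%N.
Proof.
move=> lt_B; rewrite ltnNge; apply/negP.
by move=> le_t; have := @score_max y (score B t y).+1 lt_B le_t; rewrite ltnn.
Qed.

Lemma determined_score_eq (x y : outcome n) (T : seq 'I_n) :
  determined B t x T -> (forall j, j \in T -> y j = x j) -> score B t y = score B t x.
Proof.
move=> /forallP/(_ y)/implyP det agree; apply/eqP/det.
by apply/forallP => j; apply/implyP => /agree ->.
Qed.

Lemma count_uniq_sum (T : seq 'I_n) (P : pred 'I_n) :
  uniq T -> count P T = (\sum_(j < n) ((j \in T) && P j : nat))%N.
Proof.
move=> T_uniq; rewrite -sum1_count big_mkcond (big_uniq _ T_uniq) /= big_mkcond /=.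
by apply: eq_bigr => j _; case: (j \in T); case: (P j).
Qed.

(* Fill the untested coordinates with failures, resp. successes: both
   completions of [x] have the score of [x]. *)
Lemma determined_counts (x : outcome n) (T : seq 'I_n) :
  uniq T -> determined B t x T ->
  (t (score B t x) <= count (fun j => x j) T)%N /\
  (n.+1 - t (score B t x).+1 <= count (fun j => ~~ x j) T)%N.
Proof.
move=> T_uniq det.
pose x_lo : outcome n := [ffun j => (j \in T) && x j].
pose x_hi : outcome n := [ffun j => (j \in T) ==> x j].
have score_lo : score B t x_lo = score B t x.
  by apply: determined_score_eq det _ => j jT; rewrite ffunE jT.
have score_hi : score B t x_hi = score B t x.
  by apply: determined_score_eq det _ => j jT; rewrite ffunE jT.
have weight_lo : weight x_lo = count (fun j => x j) T.
  by rewrite (count_uniq_sum _ T_uniq); apply: eq_bigr => j _; rewrite ffunE.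
have weight_hi : (weight x_hi + count (fun j => ~~ x j) T)%N = n.
  rewrite (count_uniq_sum _ T_uniq) /weight -big_split /= -[RHS]card_ord -sum1_card.
  by apply: eq_bigr => j _; rewrite ffunE; case: (j \in T); case: (x j).
split; first by rewrite -weight_lo -score_lo t_score_le_weight.
case: (ltnP (score B t x) B) => [lt_B|ge_B].
  by have := @weight_lt_t_succ_score x_hi; rewrite score_hi => /(_ lt_B); lia.
have -> : score B t x = B by apply/eqP; rewrite eqn_leq score_le.
by rewrite tB subnn.
Qed.

End Score.

Section Strategies.
Variables (R : realFieldType) (n B : nat) (c : 'I_n -> R) (t : nat -> nat).
Variables (S : strategy n) (x : outcome n).
Hypothesis S_valid : valid_strategy B t S.

Notation tests k := (map fst (shist B t S x k)).

Lemma determined_total (T : seq 'I_n) : (forall j, j \in T) -> determined B t x T.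
Proof.
move=> all_T; apply/forallP => y; apply/implyP => /forallP agree.
suff -> : y = x by [].
by apply/ffunP => j; have /implyP/(_ (all_T j))/eqP := agree j.
Qed.

Lemma shist_uniq_determined_or_size k :
  uniq (tests k) /\ (determined B t x (tests k) \/ size (shist B t S x k) = k).
Proof.
elim: k => [|k [tests_uniq stop]] /=; first by split => //; right.
case: ifP => [det|/negbT undet]; first by split => //; left.
split; first by rewrite map_rcons rcons_uniq S_valid.
by right; rewrite size_rcons; case: stop => [det|->] //; rewrite det in undet.
Qed.

Lemma strategy_tests_determined : uniq (tests n) /\ determined B t x (tests n).
Proof.
have [tests_uniq [det|size_n]] := shist_uniq_determined_or_size n; split => //.
have card_tests : #|tests n| = #|'I_n|.
  by rewrite (card_uniqP tests_uniq) size_map size_n card_ord.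
apply: determined_total => j.
by have /subset_cardP := card_tests; rewrite subset_predT => /(_ isT)/(_ j).
Qed.

Lemma scostE : scost c B t S x = \sum_(j in [set j in tests n]) c j.
Proof.
have [tests_uniq _] := strategy_tests_determined.
rewrite /scost -(big_map fst predT) (big_uniq _ tests_uniq).
by apply: eq_bigl => j; rewrite inE.
Qed.

End Strategies.

Section RoundRobin.
Variables (R : realFieldType) (n : nat) (c p : 'I_n -> R).
Hypothesis c_ge0 : forall j, 0 <= c j.
Hypothesis p_range : forall j, 0 < p j < 1.
Variables (sfail ssucc : seq 'I_n) (tie : nat -> bool).

Definition outcome_prob (h : bool) (j : 'I_n) : R := if h then p j else 1 - p j.
Definition ratio (h : bool) (j : 'I_n) : R := c j / outcome_prob h j.
Definition alg (h : bool) : seq 'I_n := if h then ssucc else sfail.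

Hypothesis alg_perm : forall h, perm_eq (alg h) (enum 'I_n).
Hypothesis alg_sorted : forall h, sorted (fun a b => ratio h a <= ratio h b) (alg h).

Lemma outcome_prob_gt0 h j : 0 < outcome_prob h j.
Proof. by case: h; have /andP[? ?] := p_range j; rewrite /outcome_prob ?subr_gt0. Qed.

Lemma outcome_probN h j : outcome_prob h j + outcome_prob (~~ h) j = 1.
Proof. by case: h; rewrite /outcome_prob /= ?subrK // addrC subrK. Qed.

Lemma ratio_ge0 h j : 0 <= ratio h j.
Proof. by rewrite divr_ge0 // ltW ?outcome_prob_gt0. Qed.

Lemma cost_le_ratio h j : c j <= ratio h j.
Proof.
have prob_le1 : outcome_prob h j <= 1.
  by rewrite -(outcome_probN h j) lerDl ltW ?outcome_prob_gt0.
by rewrite ler_pdivlMr ?outcome_prob_gt0 // ler_piMr.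
Qed.

Lemma le_ratios_le_2cost h j q :
  q <= ratio h j -> q <= ratio (~~ h) j -> q <= 2 * c j.
Proof.
have cE b : outcome_prob b j * ratio b j = c j.
  by rewrite /ratio mulrC mulfVK // gt_eqF ?outcome_prob_gt0.
move=> /(ler_wpM2l (ltW (outcome_prob_gt0 h j))) le_h.
move=> /(ler_wpM2l (ltW (outcome_prob_gt0 (~~ h) j))) le_nh.
rewrite -[q]mul1r -{1}(outcome_probN h j) mulrDl.
by apply: le_trans (lerD le_h le_nh) _; rewrite !cE mulr_natl mulr2n.
Qed.

Lemma first_untested_alg h done j :
  first_untested (alg h) done = Some j ->
  j \notin done /\ forall w, w \notin done -> ratio h j <= ratio h w.
Proof. exact: first_untested_min. Qed.

Lemma rr_step_heads tau tr e :
  rr_step c sfail ssucc tie tau tr = Some e ->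
  first_untested (alg e.1) (map snd tr) = Some e.2 /\
  forall h, exists2 j, first_untested (alg h) (map snd tr) = Some j &
    Cacc c e.1 tr + c e.2 <= Cacc c h tr + c j.
Proof.
rewrite /rr_step.
case Ef: (first_untested sfail _) => [jf|] //; case Es: (first_untested ssucc _) => [js|] // [<-].
case: ltgtP => [lt|gt|eq]; [| | case: (tie tau)] => /=;
  (split; [by [] | case; [exists js | exists jf]]) => //;
  by rewrite ?(ltW lt) ?(ltW gt) ?eq.
Qed.

Definition greedy_trace (tr : seq (bool * 'I_n)) : Prop :=
  uniq (map snd tr) /\
  forall e w, e \in tr -> w \notin map snd tr -> ratio e.1 e.2 <= ratio e.1 w.

Lemma greedy_trace_rcons tau tr e :
  rr_step c sfail ssucc tie tau tr = Some e ->
  greedy_trace tr -> greedy_trace (rcons tr e).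
Proof.
case/rr_step_heads=> /first_untested_alg[e_new e_min] _ [tr_uniq tr_greedy].
split; first by rewrite map_rcons rcons_uniq e_new.
move=> e' w; rewrite map_rcons !mem_rcons !inE negb_or => /predU1P[->|e'_tr] /andP[_ w_new].
  exact: e_min.
exact: tr_greedy.
Qed.

Definition conducted_by (h : bool) (tr : seq (bool * 'I_n)) : {set 'I_n} :=
  [set j in [seq e.2 | e <- tr & e.1 == h]].

Lemma Cacc_conducted_by h tr :
  uniq (map snd tr) -> Cacc c h tr = \sum_(j in conducted_by h tr) c j.
Proof.
move=> tr_uniq; have A_uniq : uniq [seq e.2 | e <- tr & e.1 == h].
  by apply: subseq_uniq tr_uniq; apply/map_subseq/filter_subseq.
rewrite /Cacc -big_filter -(big_map snd predT) (big_uniq _ A_uniq).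
by apply: eq_bigl => j; rewrite inE.
Qed.

(* Apply the exchange bound to the order [h] whose next test has the smaller
   ratio; the chosen order is charged no more than [h] by [rr_step_heads]. *)
Lemma rr_step_cost_le tau tr e (T : {set 'I_n}) :
  rr_step c sfail ssucc tie tau tr = Some e -> greedy_trace tr ->
  (size tr < #|T|)%N -> Cacc c e.1 tr + c e.2 <= 2 * \sum_(j in T) c j.
Proof.
move=> step [tr_uniq tr_greedy] ltT.
pose D := [set j in map snd tr].
suff bound h j j' : first_untested (alg h) (map snd tr) = Some j ->
    first_untested (alg (~~ h)) (map snd tr) = Some j' ->
    ratio h j <= ratio (~~ h) j' -> Cacc c h tr + c j <= 2 * \sum_(j in T) c j.
  have [_ heads] := rr_step_heads step.
  have [js Es le_s] := heads true; have [jf Ef le_f] := heads false.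
  case: (leP (ratio true js) (ratio false jf)) => cmp.
    exact: le_trans le_s (bound true js jf Es Ef cmp).
  exact: le_trans le_f (bound false jf js Ef Es (ltW cmp)).
move=> /first_untested_alg[j_new j_min] /first_untested_alg[_ j'_min] cmp.
rewrite Cacc_conducted_by //; apply: le_trans (lerD (lexx _) (cost_le_ratio h j)) _.
apply: (sum_capped_addr_le c_ge0 (D := D)) => //.
- exact: ratio_ge0.
- apply/subsetP => j0; rewrite !inE => /mapP[e0].
  by rewrite mem_filter => /andP[_ e0_tr] ->; apply: map_f.
- by rewrite cardsE (card_uniqP tr_uniq) size_map.
- move=> j0; rewrite inE => /mapP[e0]; rewrite mem_filter => /andP[/eqP e0h e0_tr] ->.
  by apply: le_trans (cost_le_ratio h _) _; rewrite -e0h tr_greedy // e0h.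
- move=> w; rewrite inE => w_new; apply: le_ratios_le_2cost; first exact: j_min.
  exact: le_trans cmp (j'_min w w_new).
Qed.

Variables (B : nat) (t : nat -> nat) (x : outcome n).

Notation trace := (rr_trace c B t sfail ssucc tie x).

Lemma rr_trace_take_succ k i : (i < size (trace k))%N ->
  exists e, rr_step c sfail ssucc tie i.+1 (take i (trace k)) = Some e /\
            take i.+1 (trace k) = rcons (take i (trace k)) e.
Proof.
elim: k => [//|k IH] /=; set tr := trace k.
case: ifP => _; first exact: IH.
case step: (rr_step _ _ _ _ _ _) => [e|]; last exact: IH.
rewrite size_rcons ltnS leq_eqVlt -cats1 => /predU1P[->|lt_i].
  by exists e; rewrite take_size_cat // take_oversize ?size_cat ?addn1 ?cats1.
by rewrite !takel_cat ?(ltnW lt_i) //; apply: IH.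
Qed.

Lemma greedy_trace_take k i : greedy_trace (take i (trace k)).
Proof.
elim: i => [|i IH]; first by rewrite take0.
case: (ltnP i (size (trace k))) => [/rr_trace_take_succ[e [step ->]]|ge_i].
  exact: greedy_trace_rcons step IH.
by rewrite !take_oversize // in IH *; apply: leqW.
Qed.

Lemma Cacc_rr_take_le h k m (T : {set 'I_n}) :
  (m <= #|T|)%N -> Cacc c h (take m (trace k)) <= 2 * \sum_(j in T) c j.
Proof.
elim: m => [_|m IH le_mT].
  by rewrite take0 /Cacc big_nil mulr_ge0 ?sumr_ge0.
case: (ltnP m (size (trace k))) => [lt_m|ge_m]; last first.
  by rewrite !take_oversize ?leqW // in IH *; apply: IH; apply: ltnW.
have [e [step ->]] := rr_trace_take_succ lt_m.
rewrite /Cacc big_rcons /= -/(Cacc c h _); case: eqP => [<-|_].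
  apply: rr_step_cost_le step (greedy_trace_take k m) _.
  by rewrite size_takel // ltnW.
by rewrite addr0 IH // ltnW.
Qed.

Lemma sum_rr_cost h m :
  \sum_(1 <= tau < m.+1) rr_cost c B t sfail ssucc tie x h tau
  = Cacc c h (take m (rr_run c B t sfail ssucc tie x)).
Proof.
rewrite big_add1 /= /Cacc [RHS]big_mkcond -sum_onth_take.
by apply: eq_bigr => i _; rewrite /rr_cost /=; case: onth.
Qed.

Hypotheses (B_ge1 : (1 <= B)%N) (t1 : t 1%N = 0%N) (tB : t B.+1 = n.+1).

Lemma tau1_le_size (T : seq 'I_n) :
  uniq T -> determined B t x T -> (tau1 c B t sfail ssucc tie x <= size T)%N.
Proof.
move=> T_uniq det; have [succ_T fail_T] := determined_counts B_ge1 t1 tB T_uniq det.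
set run := rr_run c B t sfail ssucc tie x.
rewrite /tau1 -/run; set cond := tau1_cond _ _ _ _ _ _ _.
case def_tau: (find cond _) => [//|m].
have lt_m : (m < find cond (iota 0 (size run).+1))%N by rewrite def_tau.
have le_m_run : (m <= size run)%N.
  by have := find_size cond (iota 0 (size run).+1); rewrite size_iota def_tau.
have := before_find 0%N lt_m; rewrite nth_iota ?ltnS // add0n /cond /tau1_cond -/run.
set T' := map snd (take m run).
have size_T' : size T' = m by rewrite size_map size_takel.
move=> /norP[]; rewrite -!ltnNge => succ_lt fail_lt.
have count_split (s : seq 'I_n) :
    (count (fun j => x j) s + count (fun j => ~~ x j) s)%N = size s.
  exact: count_predC.
by move: (count_split T) (count_split T'); lia.
Qed.

Theorem rr_cost_before_tau1_le (S : strategy n) h : valid_strategy B t S ->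
  \sum_(1 <= tau < (tau1 c B t sfail ssucc tie x).+1) rr_cost c B t sfail ssucc tie x h tau
  <= 2 * scost c B t S x.
Proof.
move=> S_valid; have [tests_uniq det] := strategy_tests_determined x S_valid.
rewrite sum_rr_cost scostE //; apply: Cacc_rr_take_le.
by rewrite cardsE (card_uniqP tests_uniq) tau1_le_size.
Qed.

End RoundRobin.

Theorem lemma5 (R : realFieldType) (n : nat) (c p : 'I_n -> R) (B : nat) (t : nat -> nat)
  (hc : forall j, 0 <= c j) (hp : forall j, 0 < p j < 1)
  (hB : (1 <= B)%N) (ht1 : t 1%N = 0%N) (htB : t B.+1 = n.+1)
  (ht : forall i, (1 <= i <= B)%N -> (t i < t i.+1)%N)
  (sfail ssucc : seq 'I_n)
  (hsf : perm_eq sfail (enum 'I_n))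
  (hsfs : sorted (fun a b => c a / (1 - p a) <= c b / (1 - p b)) sfail)
  (hss : perm_eq ssucc (enum 'I_n))
  (hsss : sorted (fun a b => c a / p a <= c b / p b) ssucc)
  (tie : nat -> bool)
  (OPT : strategy n)
  (hOPTv : valid_strategy B t OPT)
  (hOPT : forall S : strategy n, valid_strategy B t S ->
            Ecost c p B t OPT <= Ecost c p B t S)
  (x : outcome n) (h : bool) :
  \sum_(1 <= tau < (tau1 c B t sfail ssucc tie x).+1)
      rr_cost c B t sfail ssucc tie x h tau
  <= 2 * scost c B t OPT x.
Proof.
have alg_perm b : perm_eq (alg sfail ssucc b) (enum 'I_n) by case: b.
have alg_sorted b : sorted (fun j k => ratio c p b j <= ratio c p b k) (alg sfail ssucc b).
  by case: b.
exact: (rr_cost_before_tau1_le hc hp tie alg_perm alg_sorted x hB ht1 htB h hOPTv).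
Qed.
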